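(* Let $a>0$ and let $\phi$ be a random variable on $[0,2\pi]$ with density $f_\Phi(\phi)=\frac{\exp(-a\cos\phi)}{2\pi I_0(a)}$. Then $$\mathbb{E}\!\left[\exp(a e^{i\phi})\right]=\frac{J_0(a)}{I_0(a)},\qquad \mathbb{E}\!\left[\left|\exp(a e^{i\phi})\right|^2\right]=1.$$ In particular, if $a$ is a positive zero of $J_0$, then $\mathbb{E}[\exp(a e^{i\phi})]=0$ and $\mathbb{E}[|\exp(a e^{i\phi})|^2]=1$.
   Context: $J_0$ is the Bessel function of the first kind of order $0$ and $I_0$ is the modified Bessel function of the first kind of order $0$. *)

From Stdlib Require Import Reals Factorial.
From Coquelicot Require Import Coquelicot.
Open Scope R_scope.

Definition cexp (z : C) : C :=
  (exp (Re z) * cos (Im z), exp (Re z) * sin (Im z)).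

Definition J0 (x : R) : R :=
  Series (fun k => (-1) ^ k * (x / 2) ^ (2 * k) / (INR (Factorial.fact k)) ^ 2).

Definition I0 (x : R) : R :=
  Series (fun k => (x / 2) ^ (2 * k) / (INR (Factorial.fact k)) ^ 2).

Definition density_Phi (a phi : R) : R :=
  exp (- a * cos phi) / (2 * PI * I0 a).

Definition expect_C (a : R) (g : R -> C) : C :=
  RInt (V := C_R_CompleteNormedModule)
    (fun phi => scal (density_Phi a phi) (g phi)) 0 (2 * PI).

Definition expect_R (a : R) (h : R -> R) : R :=
  RInt (fun phi => density_Phi a phi * h phi) 0 (2 * PI).

From Stdlib Require Import Reals Lra Lia Factorial.
From Coquelicot Require Import Coquelicot.
Open Scope R_scope.

(* Writing exp (a e^{it}) = exp (a cos t) (cos (a sin t) + i sin (a sin t)),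
   the density exp (-a cos t) / (2 pi I0 a) of Phi cancels the modulus
   exp (a cos t) exactly, so
     E[exp (a e^{i Phi})]     = (1 / (2 pi I0 a)) (int cos (a sin t) + i int sin (a sin t)),
     E[|exp (a e^{i Phi})|^2] = (1 / (2 pi I0 a)) int exp (a cos t),
   all integrals over [0, 2 pi].  The theorem therefore reduces to the
   integral representations 2 pi I0 a = int exp (a cos t) and
   2 pi J0 a = int cos (a sin t), together with int sin (a sin t) = 0
   (the integrand is antisymmetric about pi).
   The representations are proved by integrating the Taylor series term by
   term (dominated by a convergent series of constants) and evaluating the
   trigonometric moments int f^n over a period, for f = cos or sin, through
   the Wallis recurrence (n + 2) M (n + 2) = (n + 1) M n, which we derive once
   for any 2 pi-periodic "rotation pair" f' = -g, g' = f, f^2 + g^2 = 1.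
   All intermediate results hold for every real a; positivity of a is only
   part of the statement. *)

Ltac solve_smooth_continuity :=
  apply (ex_derive_continuous (K := R_AbsRing) (V := R_NormedModule));
  auto_derive; auto.

Definition moment (f : R -> R) (n : nat) : R := RInt (fun t => f t ^ n) 0 (2 * PI).

Section RotationPair.
Variables f g : R -> R.
Hypothesis f_deriv : forall x, is_derive f x (- g x).
Hypothesis g_deriv : forall x, is_derive g x (f x).
Hypothesis pythagoras : forall x, f x ^ 2 + g x ^ 2 = 1.
Hypothesis f_periodic : f (2 * PI) = f 0.
Hypothesis g_periodic : g (2 * PI) = g 0.

Lemma continuous_rotation_power n x : continuous (fun t => f t ^ n) x.
Proof.
  apply (ex_derive_continuous (K := R_AbsRing) (V := R_NormedModule)).
  eexists; apply is_derive_pow, f_deriv.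
Qed.

Lemma ex_RInt_rotation_power n : ex_RInt (fun t => f t ^ n) 0 (2 * PI).
Proof.
  apply (ex_RInt_continuous (V := R_CompleteNormedModule)).
  intros; apply continuous_rotation_power.
Qed.

(* Wallis recurrence, by integrating (g f^(n+1))' = (n+2) f^(n+2) - (n+1) f^n. *)
Lemma moment_recurrence n :
  (INR n + 2) * moment f (S (S n)) = (INR n + 1) * moment f n.
Proof.
  set (D t := (INR n + 2) * f t ^ S (S n) - (INR n + 1) * f t ^ n).
  assert (D_deriv : forall x, is_derive (fun t => g t * f t ^ S n) x (D x)).
  { intros x.
    assert (Hg2 : g x ^ 2 = 1 - f x ^ 2) by (rewrite <- (pythagoras x); ring).
    eapply is_derive_ext; [intros t; reflexivity|].
    replace (D x) with (plus (mult (f x) (f x ^ S n)) (mult (g x) (INR (S n) * - g x * f x ^ pred (S n)))).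
    - apply (is_derive_mult (K := R_AbsRing)); [apply g_deriv | apply is_derive_pow, f_deriv | apply Rmult_comm].
    - unfold D, plus, mult; simpl pred; rewrite S_INR; simpl.
      replace (g x * ((INR n + 1) * - g x * f x ^ n)) with (- (INR n + 1) * g x ^ 2 * f x ^ n) by ring.
      rewrite Hg2; ring. }
  assert (D_cont : forall x, continuous D x).
  { intros x; apply (continuous_minus (V := R_NormedModule));
      apply (continuous_scal_r (V := R_NormedModule)); apply continuous_rotation_power. }
  pose proof (is_RInt_derive (V := R_CompleteNormedModule) _ D 0 (2 * PI)
    (fun x _ => D_deriv x) (fun x _ => D_cont x)) as HD.
  simpl in HD. rewrite f_periodic, g_periodic, minus_eq_zero in HD.
  assert (HD' : is_RInt D 0 (2 * PI)
    ((INR n + 2) * moment f (S (S n)) - (INR n + 1) * moment f n)).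
  { apply (is_RInt_minus (V := R_NormedModule)); apply (is_RInt_scal (V := R_NormedModule));
      apply (RInt_correct (V := R_CompleteNormedModule)), ex_RInt_rotation_power. }
  apply Rminus_diag_uniq.
  rewrite <- (is_RInt_unique _ _ _ _ HD'); exact (is_RInt_unique _ _ _ _ HD).
Qed.

End RotationPair.

Lemma moment_0 (f : R -> R) : moment f 0 = 2 * PI.
Proof.
  unfold moment; simpl.
  rewrite (RInt_const (V := R_CompleteNormedModule)); unfold scal; simpl; unfold mult; simpl; ring.
Qed.

Lemma moment_cos_1 : moment cos 1 = 0.
Proof.
  unfold moment.
  assert (H : is_RInt (fun t => cos t ^ 1) 0 (2 * PI) (minus (sin (2 * PI)) (sin 0))).
  { apply (is_RInt_derive (V := R_CompleteNormedModule)); intros x _;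
      [auto_derive; auto; ring | solve_smooth_continuity]. }
  rewrite (is_RInt_unique _ _ _ _ H), sin_2PI, sin_0; exact (minus_eq_zero (G := R_AbelianGroup) 0).
Qed.

Lemma moment_cos_recurrence n :
  (INR n + 2) * moment cos (S (S n)) = (INR n + 1) * moment cos n.
Proof.
  apply (moment_recurrence cos sin).
  - intros x; auto_derive; auto; ring.
  - intros x; auto_derive; auto; ring.
  - intros x; rewrite <- (sin2_cos2 x); unfold Rsqr; ring.
  - now rewrite cos_2PI, cos_0.
  - now rewrite sin_2PI, sin_0.
Qed.

Lemma moment_sin_recurrence n :
  (INR n + 2) * moment sin (S (S n)) = (INR n + 1) * moment sin n.
Proof.
  apply (moment_recurrence sin (fun t => - cos t)).
  - intros x; auto_derive; auto; ring.
  - intros x; auto_derive; auto; ring.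
  - intros x; rewrite <- (sin2_cos2 x); unfold Rsqr; ring.
  - now rewrite sin_2PI, sin_0.
  - now rewrite cos_2PI, cos_0.
Qed.

Section MomentRecurrence.
Variable u : nat -> R.
Hypothesis u_recurrence : forall n, (INR n + 2) * u (S (S n)) = (INR n + 1) * u n.

Lemma even_moment_closed_form : u 0%nat = 2 * PI ->
  forall k, u (2 * k)%nat / INR (fact (2 * k)) = 2 * PI / (4 ^ k * INR (fact k) ^ 2).
Proof.
  intros u0 k; induction k as [|k IHk].
  - simpl; rewrite u0; field.
  - replace (2 * S k)%nat with (S (S (2 * k))) by lia.
    assert (Hstep : u (S (S (2 * k))) = (INR (2 * k) + 1) / (INR (2 * k) + 2) * u (2 * k)%nat).
    { pose proof (u_recurrence (2 * k)); pose proof (pos_INR (2 * k)).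
      field_simplify_eq; lra. }
    pose proof (INR_fact_neq_0 (2 * k)); pose proof (INR_fact_neq_0 k); pose proof (pos_INR k).
    rewrite Hstep, !fact_simpl, !mult_INR, !S_INR.
    rewrite mult_INR in *; simpl INR in *.
    replace (2 * PI / (4 ^ S k * ((INR k + 1) * INR (fact k)) ^ 2))
      with (2 * PI / (4 ^ k * INR (fact k) ^ 2) / (4 * (INR k + 1) ^ 2))
      by (simpl; field; repeat split; try lra; apply pow_nonzero; lra).
    rewrite <- IHk; field; repeat split; lra.
Qed.

Lemma odd_moment_zero : u 1%nat = 0 -> forall k, u (S (2 * k)) = 0.
Proof.
  intros u1 k; induction k as [|k IHk]; [exact u1|].
  replace (S (2 * S k)) with (S (S (S (2 * k)))) by lia.
  pose proof (u_recurrence (S (2 * k))) as H; rewrite IHk in H.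
  pose proof (pos_INR (S (2 * k))); nra.
Qed.

Lemma even_moment_coefficient (a : R) : u 0%nat = 2 * PI ->
  forall k, a ^ (2 * k) * (u (2 * k)%nat / INR (fact (2 * k)))
            = 2 * PI * ((a / 2) ^ (2 * k) / INR (fact k) ^ 2).
Proof.
  intros u0 k; rewrite (even_moment_closed_form u0 k).
  unfold Rdiv; rewrite Rpow_mult_distr, pow_inv, (pow_mult 2).
  replace (2 ^ 2) with 4 by ring.
  pose proof (INR_fact_neq_0 k); field; split; [|apply pow_nonzero]; lra.
Qed.
End MomentRecurrence.

Lemma series_remainder_bound (a b : nat -> R) (l : R) N :
  is_series a l -> ex_series b -> (forall n, Rabs (a n) <= b n) ->
  Rabs (l - sum_n a N) <= Series b - sum_n b N.
Proof.
  intros Ha Hb Hab.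
  assert (tail : forall (c : nat -> R) (lc : R), is_series c lc ->
            is_series (fun k => c (S N + k)%nat) (lc - sum_n c N)).
  { intros c lc Hc; apply (is_series_incr_n (V := R_NormedModule) c (S N)); [lia|].
    match goal with |- is_series _ ?x => replace x with lc; [exact Hc|] end.
    simpl; unfold plus; simpl; change (lc = lc - sum_n c N + sum_n c N); ring. }
  pose proof (tail b _ (Series_correct _ Hb)) as Tb.
  rewrite <- (is_series_unique _ _ (tail a l Ha)), <- (is_series_unique _ _ Tb).
  assert (Ea : ex_series (fun k => Rabs (a (S N + k)%nat))).
  { apply (ex_series_le (K := R_AbsRing) (V := R_CompleteNormedModule)) with (b := fun k => b (S N + k)%nat);
      [|eexists; exact Tb].
    intros n; unfold norm; simpl; unfold abs; simpl; rewrite Rabs_Rabsolu; apply Hab. }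
  eapply Rle_trans; [apply Series_Rabs, Ea|].
  apply Series_le; [intros n; split; [apply Rabs_pos | apply Hab] | eexists; exact Tb].
Qed.

Lemma RInt_series (g : R -> R) (v : nat -> R -> R) (b : nat -> R) (lo hi : R) :
  lo <= hi ->
  (forall x, is_series (fun n => v n x) (g x)) ->
  (forall n x, Rabs (v n x) <= b n) ->
  ex_series b ->
  (forall n, ex_RInt (v n) lo hi) ->
  ex_RInt g lo hi ->
  is_series (fun n => RInt (v n) lo hi) (RInt g lo hi).
Proof.
  intros Hlh Hs Hvb Hb Hv Hg.
  set (P := fun N => sum_n (fun n => RInt (v n) lo hi) N : R).
  assert (partial_int : forall N, is_RInt (fun x => sum_n (fun n => v n x) N) lo hi (P N)).
  { induction N as [|N IH]; unfold P.
    - apply (is_RInt_ext (V := R_NormedModule) (v 0%nat)); [intros; now rewrite sum_O|].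
      rewrite sum_O; apply (RInt_correct (V := R_CompleteNormedModule)), Hv.
    - rewrite sum_Sn.
      apply (is_RInt_ext (V := R_NormedModule) (fun x => plus (sum_n (fun n => v n x) N) (v (S N) x)));
        [intros; now rewrite sum_Sn|].
      apply (is_RInt_plus (V := R_NormedModule)); [exact IH|].
      apply (RInt_correct (V := R_CompleteNormedModule)), Hv. }
  assert (error : forall N, Rabs (RInt g lo hi - P N) <= (hi - lo) * (Series b - sum_n b N)).
  { intros N.
    assert (H : is_RInt (fun x => g x - sum_n (fun n => v n x) N) lo hi (RInt g lo hi - P N)).
    { apply (is_RInt_minus (V := R_NormedModule)); [apply (RInt_correct (V := R_CompleteNormedModule)), Hg|].
      apply partial_int. }
    rewrite <- (is_RInt_unique _ _ _ _ H).
    apply abs_RInt_le_const; [exact Hlh | eexists; exact H |].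
    intros t _; apply series_remainder_bound; auto. }
  assert (error_lim : is_lim_seq (fun N => RInt g lo hi - P N) 0).
  { apply is_lim_seq_abs_0, is_lim_seq_le_le with
      (u := fun _ => 0) (w := fun N => (hi - lo) * (Series b - sum_n b N)).
    - intros n; split; [apply Rabs_pos | apply error].
    - apply is_lim_seq_const.
    - replace (Finite 0) with (Rbar_mult (hi - lo) (Series b - Series b)) by (simpl; f_equal; ring).
      apply is_lim_seq_scal_l, is_lim_seq_minus'; [apply is_lim_seq_const | apply Series_correct, Hb]. }
  assert (P_lim : is_lim_seq P (RInt g lo hi - 0)).
  { apply (is_lim_seq_ext (fun N => RInt g lo hi - (RInt g lo hi - P N))); [intros; ring|].
    apply is_lim_seq_minus'; [apply is_lim_seq_const | exact error_lim]. }
  rewrite Rminus_0_r in P_lim; exact P_lim.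
Qed.

Lemma exp_taylor_series t : is_series (fun n => t ^ n / INR (fact n)) (exp t).
Proof.
  unfold exp; destruct (exist_exp t) as [l Hl]; simpl.
  apply is_series_Reals in Hl; revert Hl.
  apply (is_series_ext (K := R_AbsRing) (V := R_NormedModule)); intros n.
  unfold Rdiv; apply Rmult_comm.
Qed.

Lemma cos_taylor_series t :
  is_series (fun k => (-1) ^ k / INR (fact (2 * k)) * t ^ (2 * k)) (cos t).
Proof.
  unfold cos; destruct (exist_cos (Rsqr t)) as [l Hl]; simpl.
  apply is_series_Reals in Hl; revert Hl.
  apply (is_series_ext (K := R_AbsRing) (V := R_NormedModule)); intros n.
  change (cos_n n * Rsqr t ^ n = (-1) ^ n / INR (fact (2 * n)) * t ^ (2 * n)).
  unfold cos_n, Rsqr; rewrite pow_mult; simpl; f_equal; f_equal; ring.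
Qed.

Lemma even_subseries (w : nat -> R) (l : R) :
  is_series w l -> (forall k, w (S (2 * k)) = 0) -> is_series (fun k => w (2 * k)%nat) l.
Proof.
  intros Hw Hodd.
  assert (partial : forall K, sum_n (fun k => w (2 * k)%nat) K = sum_n w (2 * K)).
  { induction K as [|K IH]; [reflexivity|].
    replace (2 * S K)%nat with (S (S (2 * K))) by lia.
    rewrite !sum_Sn, IH, Hodd; replace (S (S (2 * K))) with (2 * S K)%nat by lia.
    simpl; unfold plus; simpl; ring. }
  assert (L : is_lim_seq (fun K => sum_n w (2 * K)) l).
  { apply (is_lim_seq_subseq (sum_n w) l (fun K => 2 * K)%nat); [|exact Hw].
    intros Q [N HN]; exists N; intros n Hn; apply HN; lia. }
  apply (is_lim_seq_ext _ _ _ (fun K => eq_sym (partial K)) L).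
Qed.

Lemma pow_scaled_bounded_le (c t : R) n : Rabs t <= 1 -> Rabs ((c * t) ^ n) <= Rabs c ^ n.
Proof.
  intros Ht; rewrite <- RPow_abs; apply pow_incr; split; [apply Rabs_pos|].
  rewrite Rabs_mult; rewrite <- (Rmult_1_r (Rabs c)) at 2.
  apply Rmult_le_compat_l; [apply Rabs_pos | exact Ht].
Qed.

Lemma cos_taylor_term_bound a t k : Rabs t <= 1 ->
  Rabs ((-1) ^ k / INR (fact (2 * k)) * (a * t) ^ (2 * k)) <= (a ^ 2) ^ k / INR (fact k).
Proof.
  intros Ht; rewrite Rabs_mult; unfold Rdiv; rewrite Rabs_mult, pow_1_abs, Rmult_1_l.
  rewrite (Rabs_right (/ _)) by (apply Rle_ge, Rlt_le, Rinv_0_lt_compat, INR_fact_lt_0).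
  rewrite <- pow_mult, Rmult_comm.
  apply Rmult_le_compat.
  - apply Rabs_pos.
  - apply Rlt_le, Rinv_0_lt_compat, INR_fact_lt_0.
  - eapply Rle_trans; [apply pow_scaled_bounded_le, Ht|].
    rewrite RPow_abs, Rabs_right; [apply Rle_refl|].
    rewrite pow_mult; apply Rle_ge, pow_le, pow2_ge_0.
  - apply Rinv_le_contravar; [apply INR_fact_lt_0|]; apply le_INR, fact_le; lia.
Qed.

Lemma continuous_exp_cos a x : continuous (fun t => exp (a * cos t)) x.
Proof. solve_smooth_continuity. Qed.

Lemma continuous_cos_sin a x : continuous (fun t => cos (a * sin t)) x.
Proof. solve_smooth_continuity. Qed.

Lemma continuous_sin_sin a x : continuous (fun t => sin (a * sin t)) x.
Proof. solve_smooth_continuity. Qed.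

Lemma exp_cos_integral_series a :
  is_series (fun k => 2 * PI * ((a / 2) ^ (2 * k) / INR (fact k) ^ 2))
            (RInt (fun t => exp (a * cos t)) 0 (2 * PI)).
Proof.
  pose proof PI_RGT_0.
  assert (termwise : is_series (fun n => a ^ n / INR (fact n) * moment cos n)
                               (RInt (fun t => exp (a * cos t)) 0 (2 * PI))).
  { eapply (is_series_ext (K := R_AbsRing) (V := R_NormedModule));
      [|apply (RInt_series _ (fun n t => (a * cos t) ^ n / INR (fact n)) (fun n => Rabs a ^ n / INR (fact n)))].
    - intros n; unfold moment.
      transitivity (scal (a ^ n / INR (fact n)) (RInt (fun t => cos t ^ n) 0 (2 * PI)));
        [|reflexivity].
      rewrite <- (RInt_scal (V := R_CompleteNormedModule))
        by apply (ex_RInt_rotation_power cos sin is_derive_cos).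
      apply RInt_ext; intros x _; rewrite Rpow_mult_distr; unfold scal; simpl; unfold mult; simpl.
      unfold Rdiv; ring.
    - lra.
    - intros x; apply exp_taylor_series.
    - intros n x; unfold Rdiv; rewrite Rabs_mult, (Rabs_right (/ _))
        by (apply Rle_ge, Rlt_le, Rinv_0_lt_compat, INR_fact_lt_0).
      apply Rmult_le_compat_r; [apply Rlt_le, Rinv_0_lt_compat, INR_fact_lt_0|].
      apply pow_scaled_bounded_le, Rabs_le, COS_bound.
    - eexists; apply exp_taylor_series.
    - intros n; apply (ex_RInt_continuous (V := R_CompleteNormedModule)); intros; solve_smooth_continuity.
    - apply (ex_RInt_continuous (V := R_CompleteNormedModule)); intros; apply continuous_exp_cos. }
  apply even_subseries in termwise.
  - revert termwise; apply (is_series_ext (K := R_AbsRing) (V := R_NormedModule)); intros k.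
    rewrite <- (even_moment_coefficient _ moment_cos_recurrence a (moment_0 cos) k).
    unfold Rdiv; simpl; ring.
  - intros k; rewrite (odd_moment_zero _ moment_cos_recurrence moment_cos_1 k); ring.
Qed.

Lemma cos_sin_integral_series a :
  is_series (fun k => 2 * PI * ((-1) ^ k * (a / 2) ^ (2 * k) / INR (fact k) ^ 2))
            (RInt (fun t => cos (a * sin t)) 0 (2 * PI)).
Proof.
  pose proof PI_RGT_0.
  assert (termwise : is_series (fun k => (-1) ^ k * (a ^ (2 * k) * (moment sin (2 * k) / INR (fact (2 * k)))))
                               (RInt (fun t => cos (a * sin t)) 0 (2 * PI))).
  { eapply (is_series_ext (K := R_AbsRing) (V := R_NormedModule));
      [|apply (RInt_series _ (fun k t => (-1) ^ k / INR (fact (2 * k)) * (a * sin t) ^ (2 * k))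
                             (fun k => (a ^ 2) ^ k / INR (fact k)))].
    - intros k; unfold moment.
      transitivity (scal ((-1) ^ k / INR (fact (2 * k)) * a ^ (2 * k))
                         (RInt (fun t => sin t ^ (2 * k)) 0 (2 * PI)));
        [|unfold scal; simpl; unfold mult; simpl; unfold Rdiv; ring].
      rewrite <- (RInt_scal (V := R_CompleteNormedModule));
        [|apply (ex_RInt_rotation_power sin (fun t => - cos t)); intros x; auto_derive; auto; ring].
      apply RInt_ext; intros x _; rewrite Rpow_mult_distr; unfold scal; simpl; unfold mult; simpl.
      unfold Rdiv; ring.
    - lra.
    - intros x; apply cos_taylor_series.
    - intros k x; apply cos_taylor_term_bound, Rabs_le, SIN_bound.
    - eexists; apply exp_taylor_series.
    - intros n; apply (ex_RInt_continuous (V := R_CompleteNormedModule)); intros; solve_smooth_continuity.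
    - apply (ex_RInt_continuous (V := R_CompleteNormedModule)); intros; apply continuous_cos_sin. }
  revert termwise; apply (is_series_ext (K := R_AbsRing) (V := R_NormedModule)); intros k.
  rewrite (even_moment_coefficient _ moment_sin_recurrence a (moment_0 sin) k).
  change ((-1) ^ k * (2 * PI * ((a / 2) ^ (2 * k) / INR (fact k) ^ 2))
          = 2 * PI * ((-1) ^ k * (a / 2) ^ (2 * k) / INR (fact k) ^ 2)).
  unfold Rdiv; ring.
Qed.

Lemma I0_integral a : 2 * PI * I0 a = RInt (fun t => exp (a * cos t)) 0 (2 * PI).
Proof.
  unfold I0; rewrite <- Series_scal_l.
  apply is_series_unique, exp_cos_integral_series.
Qed.

Lemma J0_integral a : 2 * PI * J0 a = RInt (fun t => cos (a * sin t)) 0 (2 * PI).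
Proof.
  unfold J0; rewrite <- Series_scal_l.
  apply is_series_unique, cos_sin_integral_series.
Qed.

Lemma RInt_antisymmetric (h : R -> R) (T : R) :
  ex_RInt h 0 T -> (forall t, h (T - t) = - h t) -> RInt h 0 T = 0.
Proof.
  intros Hh Hanti.
  assert (Hrefl : is_RInt (fun t => scal (-1) (h (-1 * t + T))) 0 T (RInt h T 0)).
  { apply (is_RInt_comp_lin (V := R_NormedModule)).
    replace (-1 * 0 + T) with T by ring; replace (-1 * T + T) with 0 by ring.
    apply (RInt_correct (V := R_CompleteNormedModule)), (ex_RInt_swap (V := R_NormedModule)), Hh. }
  assert (Hsame : is_RInt h 0 T (RInt h T 0)).
  { revert Hrefl; apply (is_RInt_ext (V := R_NormedModule)); intros t _.
    replace (-1 * t + T) with (T - t) by ring; rewrite Hanti.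
    unfold scal; simpl; unfold mult; simpl; ring. }
  rewrite <- (opp_RInt_swap (V := R_CompleteNormedModule)) in Hsame by exact Hh.
  apply (is_RInt_unique (V := R_CompleteNormedModule)) in Hsame.
  change (RInt h 0 T = - RInt h 0 T) in Hsame; lra.
Qed.

Lemma sin_sin_integral_zero a : RInt (fun t => sin (a * sin t)) 0 (2 * PI) = 0.
Proof.
  apply RInt_antisymmetric.
  - apply (ex_RInt_continuous (V := R_CompleteNormedModule)); intros; apply continuous_sin_sin.
  - intros t; rewrite sin_minus, sin_2PI, cos_2PI.
    replace (a * (0 * cos t - 1 * sin t)) with (- (a * sin t)) by ring; apply sin_neg.
Qed.

(* I0 a = (1 / 2 pi) int exp (a cos t) > 0; this legitimizes the density. *)
Lemma I0_pos a : 0 < I0 a.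
Proof.
  pose proof PI_RGT_0.
  apply (Rmult_lt_reg_l (2 * PI)); [lra|]; rewrite Rmult_0_r, I0_integral.
  apply RInt_gt_0; [lra | intros; apply exp_pos | intros; apply continuous_exp_cos].
Qed.

Lemma density_Phi_cancel a t : density_Phi a t * exp (a * cos t) = / (2 * PI * I0 a).
Proof.
  pose proof PI_RGT_0; pose proof (I0_pos a); pose proof (exp_pos (a * cos t)).
  unfold density_Phi; replace (- a * cos t) with (- (a * cos t)) by ring.
  rewrite exp_Ropp; field; repeat split; lra.
Qed.

Lemma Cmod_cexp_sq (z : C) : Cmod (cexp z) ^ 2 = exp (Re z) ^ 2.
Proof.
  unfold cexp, Cmod; simpl (fst _); simpl (snd _).
  rewrite pow2_sqrt by (apply Rplus_le_le_0_compat; apply pow2_ge_0).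
  replace ((exp (Re z) * cos (Im z)) ^ 2 + (exp (Re z) * sin (Im z)) ^ 2)
    with (exp (Re z) ^ 2 * (Rsqr (sin (Im z)) + Rsqr (cos (Im z)))) by (unfold Rsqr; ring).
  rewrite sin2_cos2; ring.
Qed.

Lemma expect_exp_rotation a :
  expect_C a (fun phi => cexp ((a * cos phi, a * sin phi) : C)) = RtoC (J0 a / I0 a).
Proof.
  pose proof PI_RGT_0; pose proof (I0_pos a).
  set (c := / (2 * PI * I0 a)).
  assert (component : forall (h : R -> R), (forall x, continuous h x) ->
      is_RInt (fun t => density_Phi a t * (exp (a * cos t) * h (a * sin t))) 0 (2 * PI)
              (c * RInt (fun t => h (a * sin t)) 0 (2 * PI))).
  { intros h Hh.
    apply (is_RInt_ext (V := R_NormedModule) (fun t => c * h (a * sin t))).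
    - intros t _; unfold c; rewrite <- (density_Phi_cancel a t).
      change (density_Phi a t * exp (a * cos t) * h (a * sin t)
              = density_Phi a t * (exp (a * cos t) * h (a * sin t))); ring.
    - apply (is_RInt_scal (V := R_NormedModule)), (RInt_correct (V := R_CompleteNormedModule)).
      apply (ex_RInt_continuous (V := R_CompleteNormedModule)); intros x _.
      apply (continuous_comp (fun t => a * sin t) h); [solve_smooth_continuity | apply Hh]. }
  unfold expect_C; apply (is_RInt_unique (V := C_R_CompleteNormedModule)).
  replace (RtoC (J0 a / I0 a))
    with ((c * RInt (fun t => cos (a * sin t)) 0 (2 * PI), c * RInt (fun t => sin (a * sin t)) 0 (2 * PI)) : C).
  - apply (is_RInt_fct_extend_pair (U := R_NormedModule) (V := R_NormedModule));
      apply component; intros x; solve_smooth_continuity.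
  - rewrite sin_sin_integral_zero, <- J0_integral; unfold RtoC, c; f_equal; field; lra.
Qed.

Lemma expect_modulus_sq a :
  expect_R a (fun phi => (Cmod (cexp ((a * cos phi, a * sin phi) : C))) ^ 2) = 1.
Proof.
  pose proof PI_RGT_0; pose proof (I0_pos a).
  unfold expect_R; rewrite (RInt_ext _ (fun t => / (2 * PI * I0 a) * exp (a * cos t))).
  - rewrite (RInt_scal (V := R_CompleteNormedModule) (fun t => exp (a * cos t)))
      by (apply (ex_RInt_continuous (V := R_CompleteNormedModule)); intros; apply continuous_exp_cos).
    unfold scal; simpl; unfold mult; simpl; rewrite <- I0_integral; field; lra.
  - intros t _; rewrite Cmod_cexp_sq; simpl (Re _).
    rewrite <- (density_Phi_cancel a t).
    change (density_Phi a t * exp (a * cos t) ^ 2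
            = density_Phi a t * exp (a * cos t) * exp (a * cos t)); ring.
Qed.

Theorem mainTheorem13 (a : R) (ha : 0 < a) :
  (expect_C a (fun phi => cexp ((a * cos phi, a * sin phi) : C)) = RtoC (J0 a / I0 a)
   /\ expect_R a (fun phi => (Cmod (cexp ((a * cos phi, a * sin phi) : C))) ^ 2) = 1)
  /\ (J0 a = 0 ->
      expect_C a (fun phi => cexp ((a * cos phi, a * sin phi) : C)) = RtoC 0
      /\ expect_R a (fun phi => (Cmod (cexp ((a * cos phi, a * sin phi) : C))) ^ 2) = 1).
Proof.
  split; [split; [apply expect_exp_rotation | apply expect_modulus_sq]|].
  intros J0_zero; split; [|apply expect_modulus_sq].
  rewrite expect_exp_rotation, J0_zero; unfold Rdiv; rewrite Rmult_0_l; reflexivity.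
Qed.
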